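(* The variety $\mathsf{V}(S_{(4,411)})$ is the ai-semiring variety defined by the identities $xy\approx xy+x$, $x+yx\approx x+yx+xy$, $x_1x_2x_3\approx x_1x_2x_3+x_4$, $x_1x_2+x_3x_4\approx x_1x_2+x_3x_4+x_1x_3$, $x_1x_2+x_3x_4\approx x_1x_2+x_3x_4+x_1x_4$.
   Context: An ai-semiring is an algebra $(S,+,\cdot)$ with $(S,+)$ a semilattice, $(S,\cdot)$ a semigroup, and both distributive laws. $\mathsf{V}(S)$ is the variety generated by $S$; ''the ai-semiring variety defined by identities $\Sigma$'' is the class of all ai-semirings satisfying $\Sigma$. $S_{(4,411)}$ has carrier $\{1,2,3,4\}$; addition: $x+x=x$, $2+x=x$, $1+x=1$ for all $x$, $3+4=1$; multiplication (row $a$, column $b$ gives $a\cdot b$): row $1$: $1,1,1,1$; row $2$: $1,3,1,3$; row $3$: $1,1,1,1$; row $4$: $1,1,1,1$. *)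

Record aiSemiring := AiSemiring {
  carrier :> Type;
  sadd : carrier -> carrier -> carrier;
  smul : carrier -> carrier -> carrier;
  sadd_assoc : forall x y z, sadd x (sadd y z) = sadd (sadd x y) z;
  sadd_comm : forall x y, sadd x y = sadd y x;
  sadd_idem : forall x, sadd x x = x;
  smul_assoc : forall x y z, smul x (smul y z) = smul (smul x y) z;
  smul_distl : forall x y z, smul x (sadd y z) = sadd (smul x y) (smul x z);
  smul_distr : forall x y z, smul (sadd x y) z = sadd (smul x z) (smul y z)
}.

Inductive S4 : Type := e1 | e2 | e3 | e4.

Definition S411_add (a b : S4) : S4 :=
  match a, b with
  | e1, _ => e1
  | _, e1 => e1
  | e2, y => y
  | x, e2 => x
  | e3, e3 => e3
  | e4, e4 => e4
  | e3, e4 => e1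
  | e4, e3 => e1
  end.

Definition S411_mul (a b : S4) : S4 :=
  match a, b with
  | e2, e2 => e3
  | e2, e4 => e3
  | _, _ => e1
  end.

(** Membership in V(S_(4,411)) = HSP(S_(4,411)):
    A is a homomorphic image of a subalgebra of a direct power S_(4,411)^I. *)
Definition in_V_S411 (A : aiSemiring) : Prop :=
  exists (I : Type) (P : (I -> S4) -> Prop),
    (forall f g, P f -> P g -> P (fun i => S411_add (f i) (g i))) /\
    (forall f g, P f -> P g -> P (fun i => S411_mul (f i) (g i))) /\
    exists h : {f : I -> S4 | P f} -> carrier A,
      (forall a : carrier A, exists u, h u = a) /\
      (forall u v (Huv : P (fun i => S411_add (proj1_sig u i) (proj1_sig v i))),
          h (exist _ _ Huv) = sadd A (h u) (h v)) /\
      (forall u v (Huv : P (fun i => S411_mul (proj1_sig u i) (proj1_sig v i))),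
          h (exist _ _ Huv) = smul A (h u) (h v)).

Definition satisfies_Sigma (A : aiSemiring) : Prop :=
  let add := sadd A in let mul := smul A in
  (forall x y : A, mul x y = add (mul x y) x) /\
  (forall x y : A, add x (mul y x) = add (add x (mul y x)) (mul x y)) /\
  (forall x1 x2 x3 x4 : A,
      mul (mul x1 x2) x3 = add (mul (mul x1 x2) x3) x4) /\
  (forall x1 x2 x3 x4 : A,
      add (mul x1 x2) (mul x3 x4) = add (add (mul x1 x2) (mul x3 x4)) (mul x1 x3)) /\
  (forall x1 x2 x3 x4 : A,
      add (mul x1 x2) (mul x3 x4) = add (add (mul x1 x2) (mul x3 x4)) (mul x1 x4)).

From Stdlib Require Import List Lia ClassicalEpsilon FunctionalExtensionality ProofIrrelevance.
Import ListNotations.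

(* Each identity of Sigma holds in S_(4,411) and identities pass to homomorphic
   images of subalgebras of direct powers.  Conversely, an ai-semiring A is a
   homomorphic image of the algebra of S_(4,411)-term functions over A, so it is
   enough that A satisfies every identity of S_(4,411).  A term is the join of
   the words of its expansion, so one needs: if a word w lies below a term u in
   S_(4,411), it does so in A.  If u has a word of length at least 3, then u is
   the top element of A by x1x2x3 = x1x2x3 + x4.  Otherwise, valuations sending
   one variable to 3 or 4 and all others to 2 keep every word of u below 3 unless
   u contains suitable words of length at most 2; these words are exactly what
   the remaining identities need to bound w in A. *)

Definition ai_le (R : aiSemiring) (a b : R) : Prop := sadd R a b = b.

Section Order.
Variable R : aiSemiring.

Lemma ai_le_refl a : ai_le R a a.
Proof. apply sadd_idem. Qed.

Lemma ai_le_trans a b c : ai_le R a b -> ai_le R b c -> ai_le R a c.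
Proof. unfold ai_le; intros Hab Hbc. rewrite <- Hbc, sadd_assoc, Hab. reflexivity. Qed.

Lemma ai_le_addl a b : ai_le R a (sadd R a b).
Proof. unfold ai_le. rewrite sadd_assoc, sadd_idem. reflexivity. Qed.

Lemma ai_le_addr a b : ai_le R b (sadd R a b).
Proof. rewrite sadd_comm. apply ai_le_addl. Qed.

Lemma ai_le_add_lub a b c : ai_le R a c -> ai_le R b c -> ai_le R (sadd R a b) c.
Proof. unfold ai_le; intros Hac Hbc. rewrite <- sadd_assoc, Hbc, Hac. reflexivity. Qed.

Lemma ai_le_antisym a b : ai_le R a b -> ai_le R b a -> a = b.
Proof. unfold ai_le; intros Hab Hba. rewrite <- Hab, sadd_comm. exact (eq_sym Hba). Qed.

Lemma ai_le_mul2l a b c : ai_le R a b -> ai_le R (smul R c a) (smul R c b).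
Proof. unfold ai_le; intros Hab. rewrite <- smul_distl, Hab. reflexivity. Qed.

Lemma ai_le_mul2r a b c : ai_le R a b -> ai_le R (smul R a c) (smul R b c).
Proof. unfold ai_le; intros Hab. rewrite <- smul_distr, Hab. reflexivity. Qed.

Lemma ai_le_of_absorb a b : a = sadd R a b -> ai_le R b a.
Proof. unfold ai_le; intros Hab. rewrite sadd_comm. exact (eq_sym Hab). Qed.

End Order.

Inductive term (X : Type) : Type :=
| Var : X -> term X
| Add : term X -> term X -> term X
| Mul : term X -> term X -> term X.
Arguments Var {X}.
Arguments Add {X}.
Arguments Mul {X}.

Fixpoint eval (R : aiSemiring) {X : Type} (v : X -> R) (t : term X) : R :=
  match t with
  | Var x => v x
  | Add t u => sadd R (eval R v t) (eval R v u)
  | Mul t u => smul R (eval R v t) (eval R v u)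
  end.

Definition holds (R : aiSemiring) {X : Type} (t u : term X) : Prop :=
  forall v : X -> R, eval R v t = eval R v u.

(* A word [(x, [y1; ...; yn])] is the nonempty product x y1 ... yn. *)
Definition word (X : Type) : Type := (X * list X)%type.

Definition word_cat {X : Type} (w1 w2 : word X) : word X :=
  (fst w1, snd w1 ++ fst w2 :: snd w2).

Fixpoint words {X : Type} (t : term X) : word X -> Prop :=
  match t with
  | Var x => fun w => w = (x, [])
  | Add t u => fun w => words t w \/ words u w
  | Mul t u => fun w => exists w1 w2, words t w1 /\ words u w2 /\ w = word_cat w1 w2
  end.

Fixpoint eval_word_from (R : aiSemiring) {X : Type} (v : X -> R) (x : X) (l : list X) : R :=
  match l with
  | [] => v x
  | y :: l => smul R (v x) (eval_word_from R v y l)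
  end.

Definition eval_word (R : aiSemiring) {X : Type} (v : X -> R) (w : word X) : R :=
  eval_word_from R v (fst w) (snd w).

Section Words.
Variables (R : aiSemiring) (X : Type) (v : X -> R).

Lemma eval_word_from_app l x y m :
  eval_word_from R v x (l ++ y :: m) = smul R (eval_word_from R v x l) (eval_word_from R v y m).
Proof.
  revert x; induction l as [|z l IH]; intros x; simpl; [reflexivity|].
  rewrite IH, smul_assoc. reflexivity.
Qed.

Lemma eval_word_cat w1 w2 :
  eval_word R v (word_cat w1 w2) = smul R (eval_word R v w1) (eval_word R v w2).
Proof. apply eval_word_from_app. Qed.

Lemma word_le_eval t w : words t w -> ai_le R (eval_word R v w) (eval R v t).
Proof.
  revert w; induction t as [x|t1 IH1 t2 IH2|t1 IH1 t2 IH2]; intros w Hw; simpl in Hw |- *.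
  - subst w. apply ai_le_refl.
  - destruct Hw as [Hw|Hw].
    + eapply ai_le_trans; [apply IH1, Hw | apply ai_le_addl].
    + eapply ai_le_trans; [apply IH2, Hw | apply ai_le_addr].
  - destruct Hw as (w1 & w2 & Hw1 & Hw2 & ->). rewrite eval_word_cat.
    eapply ai_le_trans; [apply ai_le_mul2r, IH1, Hw1 | apply ai_le_mul2l, IH2, Hw2].
Qed.

(* Generalising over a join-preserving [f] lets the induction absorb the
   surrounding factor of a product into [f]. *)
Lemma join_hom_eval_le t (f : R -> R) c :
  (forall a b, f (sadd R a b) = sadd R (f a) (f b)) ->
  (forall w, words t w -> ai_le R (f (eval_word R v w)) c) ->
  ai_le R (f (eval R v t)) c.
Proof.
  revert f; induction t as [x|t1 IH1 t2 IH2|t1 IH1 t2 IH2]; intros f Hf Hwords; simpl.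
  - exact (Hwords (x, []) eq_refl).
  - rewrite Hf. apply ai_le_add_lub; [apply IH1 | apply IH2]; auto;
      intros w Hw; apply Hwords; simpl; auto.
  - apply (IH1 (fun a => f (smul R a (eval R v t2)))).
    { intros a b. rewrite smul_distr, Hf. reflexivity. }
    intros w1 Hw1. apply (IH2 (fun b => f (smul R (eval_word R v w1) b))).
    { intros a b. rewrite smul_distl, Hf. reflexivity. }
    intros w2 Hw2. rewrite <- eval_word_cat. apply Hwords. simpl. eauto.
Qed.

Lemma eval_le_of_words t c :
  (forall w, words t w -> ai_le R (eval_word R v w) c) -> ai_le R (eval R v t) c.
Proof. apply (join_hom_eval_le t (fun a => a)). reflexivity. Qed.

End Words.

Definition S411 : aiSemiring.
Proof.
  refine (AiSemiring S4 S411_add S411_mul _ _ _ _ _ _); intros;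
    repeat match goal with x : S4 |- _ => destruct x end; reflexivity.
Defined.

Definition Sigma : list (term nat * term nat) :=
  [ (Mul (Var 0) (Var 1), Add (Mul (Var 0) (Var 1)) (Var 0));
    (Add (Var 0) (Mul (Var 1) (Var 0)),
     Add (Add (Var 0) (Mul (Var 1) (Var 0))) (Mul (Var 0) (Var 1)));
    (Mul (Mul (Var 0) (Var 1)) (Var 2), Add (Mul (Mul (Var 0) (Var 1)) (Var 2)) (Var 3));
    (Add (Mul (Var 0) (Var 1)) (Mul (Var 2) (Var 3)),
     Add (Add (Mul (Var 0) (Var 1)) (Mul (Var 2) (Var 3))) (Mul (Var 0) (Var 2)));
    (Add (Mul (Var 0) (Var 1)) (Mul (Var 2) (Var 3)),
     Add (Add (Mul (Var 0) (Var 1)) (Mul (Var 2) (Var 3))) (Mul (Var 0) (Var 3))) ].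

Lemma S411_holds_Sigma : Forall (fun e => holds S411 (fst e) (snd e)) Sigma.
Proof.
  repeat constructor; intros v; simpl; destruct (v 0), (v 1), (v 2), (v 3); reflexivity.
Qed.

Lemma satisfies_Sigma_of_holds A :
  Forall (fun e => holds A (fst e) (snd e)) Sigma -> satisfies_Sigma A.
Proof.
  intros HA. unfold Sigma in HA. rewrite !Forall_cons_iff in HA.
  destruct HA as (H1 & H2 & H3 & H4 & H5 & _).
  repeat split.
  - intros x y. exact (H1 (fun n => nth n [x; y] x)).
  - intros x y. exact (H2 (fun n => nth n [x; y] x)).
  - intros x1 x2 x3 x4. exact (H3 (fun n => nth n [x1; x2; x3; x4] x1)).
  - intros x1 x2 x3 x4. exact (H4 (fun n => nth n [x1; x2; x3; x4] x1)).
  - intros x1 x2 x3 x4. exact (H5 (fun n => nth n [x1; x2; x3; x4] x1)).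
Qed.

Section Soundness.
Variables (A : aiSemiring) (I : Type) (P : (I -> S4) -> Prop).
Hypothesis P_add : forall f g, P f -> P g -> P (fun i => S411_add (f i) (g i)).
Hypothesis P_mul : forall f g, P f -> P g -> P (fun i => S411_mul (f i) (g i)).
Variable h : {f : I -> S4 | P f} -> A.
Hypothesis h_add : forall u v (Huv : P (fun i => S411_add (proj1_sig u i) (proj1_sig v i))),
  h (exist _ _ Huv) = sadd A (h u) (h v).
Hypothesis h_mul : forall u v (Huv : P (fun i => S411_mul (proj1_sig u i) (proj1_sig v i))),
  h (exist _ _ Huv) = smul A (h u) (h v).
Variables (X : Type) (lift : X -> {f : I -> S4 | P f}).

Fixpoint eval_sub (t : term X) : {f : I -> S4 | P f} :=
  match t with
  | Var x => lift x
  | Add t u => exist _ _ (P_add _ _ (proj2_sig (eval_sub t)) (proj2_sig (eval_sub u)))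
  | Mul t u => exist _ _ (P_mul _ _ (proj2_sig (eval_sub t)) (proj2_sig (eval_sub u)))
  end.

Lemma h_eval_sub t : h (eval_sub t) = eval A (fun x => h (lift x)) t.
Proof.
  induction t as [x|t1 IH1 t2 IH2|t1 IH1 t2 IH2]; simpl; [reflexivity| |].
  - rewrite h_add, IH1, IH2. reflexivity.
  - rewrite h_mul, IH1, IH2. reflexivity.
Qed.

Lemma eval_sub_at t i :
  proj1_sig (eval_sub t) i = eval S411 (fun x => proj1_sig (lift x) i) t.
Proof.
  induction t as [x|t1 IH1 t2 IH2|t1 IH1 t2 IH2]; simpl; [reflexivity| |];
    rewrite IH1, IH2; reflexivity.
Qed.

Lemma holds_eval_lift t u :
  holds S411 t u -> eval A (fun x => h (lift x)) t = eval A (fun x => h (lift x)) u.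
Proof.
  intros Htu. rewrite <- !h_eval_sub. f_equal.
  apply eq_sig_hprop; [intros; apply proof_irrelevance|].
  apply functional_extensionality. intros i. rewrite !eval_sub_at. apply Htu.
Qed.

End Soundness.

Lemma holds_of_in_V_S411 A X (t u : term X) : in_V_S411 A -> holds S411 t u -> holds A t u.
Proof.
  intros (I & P & P_add & P_mul & h & h_surj & h_add & h_mul) Htu va.
  destruct (choice (fun x u => h u = va x) (fun x => h_surj (va x))) as [lift Hlift].
  replace va with (fun x => h (lift x)) by (apply functional_extensionality; exact Hlift).
  exact (holds_eval_lift A I P P_add P_mul h h_add h_mul X lift t u Htu).
Qed.

Section TermFunctions.
Variable A : aiSemiring.
Hypothesis A_identities : forall t u : term A, holds S411 t u -> holds A t u.

Definition term_fun (f : (A -> S4) -> S4) : Prop :=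
  exists t : term A, forall v, f v = eval S411 v t.

Lemma term_fun_var a : term_fun (fun v => v a).
Proof. exists (Var a). reflexivity. Qed.

Lemma term_fun_add f g : term_fun f -> term_fun g -> term_fun (fun v => S411_add (f v) (g v)).
Proof. intros [t Ht] [u Hu]. exists (Add t u). intros v. simpl. rewrite Ht, Hu. reflexivity. Qed.

Lemma term_fun_mul f g : term_fun f -> term_fun g -> term_fun (fun v => S411_mul (f v) (g v)).
Proof. intros [t Ht] [u Hu]. exists (Mul t u). intros v. simpl. rewrite Ht, Hu. reflexivity. Qed.

Definition term_of (f : {f | term_fun f}) : term A :=
  proj1_sig (constructive_indefinite_description _ (proj2_sig f)).

Lemma term_of_spec f v : proj1_sig f v = eval S411 v (term_of f).
Proof.
  unfold term_of. destruct (constructive_indefinite_description _ _) as [t Ht]. apply Ht.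
Qed.

(* A homomorphism whichever term [term_of] picks, thanks to [A_identities]. *)
Definition realize (f : {f | term_fun f}) : A := eval A (fun a => a) (term_of f).

Lemma realize_eval f t : (forall v, proj1_sig f v = eval S411 v t) -> realize f = eval A (fun a => a) t.
Proof. intros Ht. apply A_identities. intros v. rewrite <- term_of_spec. apply Ht. Qed.

Lemma in_V_S411_of_identities : in_V_S411 A.
Proof.
  exists (A -> S4), term_fun.
  split; [exact term_fun_add|]. split; [exact term_fun_mul|].
  exists realize. split; [|split].
  - intros a. exists (exist _ _ (term_fun_var a)).
    apply (realize_eval _ (Var a)). reflexivity.
  - intros u v Huv. apply (realize_eval _ (Add (term_of u) (term_of v))).
    intros w. simpl. rewrite !term_of_spec. reflexivity.
  - intros u v Huv. apply (realize_eval _ (Mul (term_of u) (term_of v))).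
    intros w. simpl. rewrite !term_of_spec. reflexivity.
Qed.

End TermFunctions.

Definition point {X : Type} (x : X) (c : S4) : X -> S4 :=
  fun z => if excluded_middle_informative (z = x) then c else e2.

Lemma point_eq {X : Type} (x : X) c : point x c x = c.
Proof. unfold point. destruct (excluded_middle_informative (x = x)); congruence. Qed.

Lemma point_neq {X : Type} (x z : X) c : z <> x -> point x c z = e2.
Proof. unfold point. destruct (excluded_middle_informative (z = x)); congruence. Qed.

Lemma point_cases {X : Type} (x z : X) c : point x c z = c \/ point x c z = e2.
Proof. unfold point. destruct (excluded_middle_informative (z = x)); auto. Qed.

Section SeparatingValuations.
Variables (X : Type) (u : term X) (w : word X).
Hypothesis S411_w_le_u : forall v, ai_le S411 (eval_word S411 v w) (eval S411 v u).
Hypothesis u_short : forall w', words u w' -> length (snd w') <= 1.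

Lemma short_word_cases x l : words u (x, l) -> l = [] \/ exists b, l = [b].
Proof.
  intros Hxl. specialize (u_short _ Hxl). simpl in u_short.
  destruct l as [|b [|]]; simpl in u_short; eauto; lia.
Qed.

Lemma eval_word_le_e3 v :
  (forall w', words u w' -> ai_le S411 (eval_word S411 v w') e3) ->
  ai_le S411 (eval_word S411 v w) e3.
Proof. intros Hwords. eapply ai_le_trans; [apply S411_w_le_u | apply eval_le_of_words, Hwords]. Qed.

Lemma word_short : length (snd w) <= 1.
Proof.
  assert (Hle : ai_le S411 (eval_word S411 (fun _ => e2) w) e3).
  { apply eval_word_le_e3. intros [y l'] Hy.
    destruct (short_word_cases _ _ Hy) as [-> | [c ->]]; reflexivity. }
  revert Hle. destruct w as [x [|a [|b l]]]; simpl; try lia.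
  unfold eval_word. simpl. destruct (eval_word_from S411 (fun _ => e2) b l); discriminate.
Qed.

Lemma head_covered x :
  ~ ai_le S411 (eval_word S411 (point x e4) w) e3 ->
  words u (x, []) \/ exists c, words u (x, [c]).
Proof.
  intros Hnot. apply NNPP. intros Hno. apply Hnot, eval_word_le_e3. intros [a l] Ha.
  destruct (short_word_cases _ _ Ha) as [-> | [b ->]];
    unfold eval_word; simpl; rewrite point_neq by (intros ->; eauto).
  - reflexivity.
  - destruct (point_cases x b e4) as [-> | ->]; reflexivity.
Qed.

Lemma pair_member y :
  ~ ai_le S411 (eval_word S411 (point y e3) w) e3 ->
  exists d, words u (y, [d]) \/ words u (d, [y]).
Proof.
  intros Hnot. apply NNPP. intros Hno. apply Hnot, eval_word_le_e3. intros [a l] Ha.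
  destruct (short_word_cases _ _ Ha) as [-> | [b ->]]; unfold eval_word; simpl.
  - destruct (point_cases y a e3) as [-> | ->]; reflexivity.
  - rewrite !point_neq by (intros ->; eauto). reflexivity.
Qed.

End SeparatingValuations.

Section SigmaModels.
Variables (A : aiSemiring) (HS : satisfies_Sigma A).

Lemma Sigma_le_mulr x y : ai_le A x (smul A x y).
Proof. apply ai_le_of_absorb, HS. Qed.

Lemma Sigma_le_swap x y : ai_le A (smul A x y) (sadd A x (smul A y x)).
Proof. apply ai_le_of_absorb, HS. Qed.

Lemma Sigma_le_mul3 x1 x2 x3 a : ai_le A a (smul A (smul A x1 x2) x3).
Proof. apply ai_le_of_absorb, HS. Qed.

Lemma Sigma_le_heads x1 x2 x3 x4 :
  ai_le A (smul A x1 x3) (sadd A (smul A x1 x2) (smul A x3 x4)).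
Proof. apply ai_le_of_absorb, HS. Qed.

Lemma Sigma_le_head_last x1 x2 x3 x4 :
  ai_le A (smul A x1 x4) (sadd A (smul A x1 x2) (smul A x3 x4)).
Proof. apply ai_le_of_absorb, HS. Qed.

Variables (X : Type) (va : X -> A).

Lemma long_word_top w a : 2 <= length (snd w) -> ai_le A a (eval_word A va w).
Proof.
  destruct w as [x [|y [|z l]]]; simpl; intros Hlen; try lia.
  unfold eval_word. simpl. rewrite smul_assoc. apply Sigma_le_mul3.
Qed.

Section ShortTerm.
Variable u : term X.
Hypothesis u_short : forall w', words u w' -> length (snd w') <= 1.

Lemma head_pair_le x y :
  (forall v, ai_le S411 (eval_word S411 v (x, [y])) (eval S411 v u)) ->
  exists c, ai_le A (smul A (va x) (va c)) (eval A va u).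
Proof.
  intros Hxy.
  destruct (pair_member X u _ Hxy u_short x) as [d [Hxd | Hdx]].
  { unfold eval_word; simpl. rewrite point_eq. discriminate. }
  - exists d. exact (word_le_eval A X va u _ Hxd).
  - destruct (head_covered X u _ Hxy u_short x) as [Hx | [c Hxc]].
    { unfold eval_word; simpl. rewrite point_eq. discriminate. }
    + exists d. eapply ai_le_trans; [apply Sigma_le_swap|].
      apply ai_le_add_lub; [exact (word_le_eval A X va u _ Hx) | exact (word_le_eval A X va u _ Hdx)].
    + exists c. exact (word_le_eval A X va u _ Hxc).
Qed.

Lemma short_word_le_of_S411 w :
  (forall v, ai_le S411 (eval_word S411 v w) (eval S411 v u)) ->
  ai_le A (eval_word A va w) (eval A va u).
Proof.
  intros Hw. pose proof (word_short X u w Hw u_short) as Hlen.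
  destruct w as [x [|y [|z l]]]; simpl in Hlen; try lia.
  - destruct (head_covered X u _ Hw u_short x) as [Hx | [c Hxc]].
    { unfold eval_word; simpl. rewrite point_eq. discriminate. }
    + exact (word_le_eval A X va u _ Hx).
    + eapply ai_le_trans; [apply (Sigma_le_mulr _ (va c)) | exact (word_le_eval A X va u _ Hxc)].
  - destruct (head_pair_le x y Hw) as [c Hxc].
    destruct (pair_member X u _ Hw u_short y) as [d [Hyd | Hdy]].
    { unfold eval_word; simpl. rewrite point_eq. destruct (point y e3 x); discriminate. }
    + eapply ai_le_trans; [apply (Sigma_le_heads _ (va c) _ (va d))|].
      apply ai_le_add_lub; [exact Hxc | exact (word_le_eval A X va u _ Hyd)].
    + eapply ai_le_trans; [apply (Sigma_le_head_last _ (va c) (va d))|].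
      apply ai_le_add_lub; [exact Hxc | exact (word_le_eval A X va u _ Hdy)].
Qed.

End ShortTerm.

Lemma word_le_of_S411 (u : term X) w :
  (forall v, ai_le S411 (eval_word S411 v w) (eval S411 v u)) ->
  ai_le A (eval_word A va w) (eval A va u).
Proof.
  intros Hw.
  destruct (classic (exists w', words u w' /\ 2 <= length (snd w'))) as [[w' [Hw' Hlong]] | Hshort].
  - eapply ai_le_trans; [apply long_word_top, Hlong | exact (word_le_eval A X va u _ Hw')].
  - apply short_word_le_of_S411; [|exact Hw].
    intros w' Hw'. assert (~ 2 <= length (snd w')) by eauto. lia.
Qed.

End SigmaModels.

Lemma S411_identities_hold A X (t u : term X) :
  satisfies_Sigma A -> holds S411 t u -> holds A t u.
Proof.
  intros HS Htu va.
  apply ai_le_antisym; apply eval_le_of_words; intros w Hw; apply word_le_of_S411; auto; intros v.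
  - rewrite <- Htu. apply word_le_eval, Hw.
  - rewrite Htu. apply word_le_eval, Hw.
Qed.

Theorem proposition5p2 :
  forall A : aiSemiring, in_V_S411 A <-> satisfies_Sigma A.
Proof.
  intros A; split.
  - intros HV. apply satisfies_Sigma_of_holds.
    eapply Forall_impl; [|exact S411_holds_Sigma].
    intros [t u]. apply holds_of_in_V_S411, HV.
  - intros HS. apply in_V_S411_of_identities.
    intros t u. apply S411_identities_hold, HS.
Qed.
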